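(* Under the standing setting and the absorbing-state assumptions (i)–(iv) in the context, there exists $K>0$ such that for all $\mathbf{x}\in\mathbb{R}^N$, $\mathbf{v}\in\chi$, $\lambda>0$, $t\ge0$ and every sequence $l=(\mathbf{x}^{(k)})_{k\ge1}$ with all $\mathbf{x}^{(k)}$ in the closed $\|\cdot\|_1$-ball $\bar B\big(\mathbf{x},\frac{1-z_0}{2K_0\tilde n}\big)$, $$\|\tilde\mu_t^{\lambda,\mathbf{x},\mathbf{v}}-\mu_t^{\lambda,\mathbf{x},\mathbf{v},l}\|_{TV}\le K\sup_{i\ge1}\|\mathbf{x}-\mathbf{x}^{(i)}\|_1.$$
   Context: Let $N\ge1$, $\chi$ a finite set, and $\{\mathcal{P}_{\mathbf{x}}\}_{\mathbf{x}\in\mathbb{R}^N}$ a family of transition matrices on $\chi$. For $\mathbf{x}\in\mathbb{R}^N$, $\mathbf{v}\in\chi$, $\lambda>0$, the frozen process $\tilde V_t^{\lambda,\mathbf{x},\mathbf{v}}$ is the càdlàg continuous-time Markov chain on $\chi$ started at $\mathbf{v}$ which jumps according to the fixed matrix $\mathcal{P}_{\mathbf{x}}$ at each ring of a Poisson clock of rate $\lambda$; its law is $\tilde\mu_t^{\lambda,\mathbf{x},\mathbf{v}}$. For a sequence $l=(\mathbf{x}^{(k)})_{k\ge1}\subset\mathbb{R}^N$, $V_t^{\lambda,\mathbf{x},\mathbf{v},l}$ is the process on $\chi$ started at $\mathbf{v}$ which, at the $k$-th ring of a Poisson clock of rate $\lambda$, jumps according to $\mathcal{P}_{\mathbf{x}^{(k)}}$;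 its law is $\mu_t^{\lambda,\mathbf{x},\mathbf{v},l}$. $\tilde V_k^{\mathbf{x},\mathbf{v}}$ is the discrete-time chain with transition matrix $\mathcal{P}_{\mathbf{x}}$ started at $\mathbf{v}$. Absorbing-state assumptions: there are distinct states $\mathbf{e}^{(1)},\dots,\mathbf{e}^{(L)}\in\chi$ such that (i) each $\mathcal{P}_{\mathbf{x}}$ is stochastic; (ii) $\mathcal{P}_{\mathbf{x}}(\mathbf{e}^{(i)},\mathbf{e}^{(i)})=1$ for all $i,\mathbf{x}$; (iii) there exist $\tilde n\ge1$ and $z_0<1$ with $\mathbb{P}[\tilde V_{\tilde n}^{\mathbf{x},\mathbf{v}}\notin\{\mathbf{e}^{(1)},\dots,\mathbf{e}^{(L)}\}]\le z_0$ for all $\mathbf{x},\mathbf{v}$; (iv) there is $K_0>0$ with $\sum_{\mathbf{v}'}|\mathcal{P}_{\mathbf{x}}(\mathbf{v},\mathbf{v}')-\mathcal{P}_{\mathbf{x}'}(\mathbf{v},\mathbf{v}')|\le K_0\|\mathbf{x}-\mathbf{x}'\|_1$ for all $\mathbf{v},\mathbf{x},\mathbf{x}'$, where $\|\mathbf{w}\|_1=\sum_i|w_i|$. $\|\mu\|_{TV}:=\sum_{\mathbf{v}'\in\chi}|\mu(\mathbf{v}')|$. *)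

From HB Require Import structures.
From mathcomp Require Import all_boot all_order all_algebra.
From mathcomp Require Import all_classical all_reals all_analysis.
Set Implicit Arguments. Unset Strict Implicit. Unset Printing Implicit Defensive.
Import Order.TTheory GRing.Theory Num.Theory.
Local Open Scope ring_scope.

Section Defs.
Variables (R : realType) (chi : finType).

Definition tkernel := chi -> chi -> R.

Definition stochastic (P : tkernel) : Prop :=
  (forall v v', 0 <= P v v') /\ (forall v, \sum_(v' : chi) P v v' = 1).

Definition step (mu : chi -> R) (P : tkernel) : chi -> R :=
  fun v' => \sum_(w : chi) mu w * P w v'.

Definition dirac_chi (v : chi) : chi -> R := fun w => if w == v then 1 else 0.

Definition frozen_dist (P : tkernel) (v : chi) (n : nat) : chi -> R :=
  iter n (fun mu => step mu P) (dirac_chi v).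

(* Law after n jumps when the k-th jump (k = 1..n) uses Q (k-1):
   delta_v Q_0 Q_1 ... Q_(n-1). *)
Fixpoint seq_dist (Q : nat -> tkernel) (v : chi) (n : nat) : chi -> R :=
  match n with
  | 0 => dirac_chi v
  | n'.+1 => step (seq_dist Q v n') (Q n')
  end.

Definition poisson_weight (lam t : R) (k : nat) : R :=
  expR (- (lam * t)) * (lam * t) ^+ k / (k`!)%:R.

(* Law at time t of the process started at v that jumps at the k-th ring of
   a rate-lam Poisson clock according to Q (k-1) (Poisson mixture formula). *)
Definition poisson_law (lam t : R) (Q : nat -> tkernel) (v : chi) : chi -> R :=
  fun v' => limn (fun n => \sum_(k < n) poisson_weight lam t k * seq_dist Q v k v').

(* Total variation as in the paper: sum of absolute values. *)
Definition tv_norm (mu : chi -> R) : R := \sum_(v : chi) `|mu v|.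

End Defs.

Definition norm1 {R : realType} {N : nat} (w : 'rV[R]_N) : R :=
  \sum_(i < N) `|w ord0 i|.

Definition mu_frozen {R : realType} {N : nat} {chi : finType}
  (P : 'rV[R]_N -> tkernel R chi) (lam t : R) (x : 'rV[R]_N) (v : chi) : chi -> R :=
  poisson_law lam t (fun _ => P x) v.

(* Non-frozen law: mu_t^{lam,x,v,l}; l i stands for x^{(i+1)}, i.e. the
   (i+1)-th jump uses P (l i). *)
Definition mu_seq {R : realType} {N : nat} {chi : finType}
  (P : 'rV[R]_N -> tkernel R chi) (lam t : R) (l : nat -> 'rV[R]_N) (v : chi) : chi -> R :=
  poisson_law lam t (fun k => P (l k)) v.

From HB Require Import structures.
From mathcomp Require Import all_boot all_order all_algebra.
From mathcomp Require Import all_classical all_reals all_analysis.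
From mathcomp Require Import ring lra.
Import Order.TTheory GRing.Theory Num.Theory.
Import numFieldNormedType.Exports.
Local Open Scope ring_scope.
Local Open Scope classical_set_scope.

(* Both laws are Poisson mixtures  sum_k w_k(lam t) * delta_v Q_0 ... Q_(k-1)
   of jump-chain laws, with Q_j = P x (frozen) or Q_j = P (l j).  As the
   Poisson weights sum to at most 1, it suffices to bound the total variation
   between the two jump chains after k jumps uniformly in k (poisson_law_tv).

   For the jump chains the difference telescopes (evolve_tv_diff).  Rows at
   absorbing states coincide, so the j-th term is at most d times the mass of
   the perturbed chain outside E at time j, where d bounds the row
   perturbations (evolve_tv_mass_out).  This outside mass is nonincreasing and,
   by assumption (iii) and the smallness of the perturbation, shrinks by a
   factor z' < 1 over every block of n~ jumps (mass_out_perturb together with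
   mass_out_evolve_contract); a geometric block-sum estimate
   (geometric_block_sum) bounds the total outside mass by n~ / (1 - z')
   (absorbing_perturbation_tv).  With d = K0 sup_i |x - x^(i)|_1 and
   z' = (1 + z0)/2 this yields K = 2 K0 n~ / (1 - z0). *)

Set Implicit Arguments. Unset Strict Implicit.

Section Evolution.
Variables (R : realType) (chi : finType).
Implicit Types (mu : chi -> R) (P : tkernel R chi) (Q : nat -> tkernel R chi).

Fixpoint evolve mu Q n : chi -> R :=
  match n with 0 => mu | n'.+1 => step (evolve mu Q n') (Q n') end.

Lemma seq_dist_evolve Q v n : seq_dist Q v n = evolve (dirac_chi R v) Q n.
Proof. by elim: n => //= n ->. Qed.

Lemma frozen_dist_evolve P v n :
  frozen_dist P v n = evolve (dirac_chi R v) (fun=> P) n.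
Proof. by elim: n => //= n <-. Qed.

Lemma evolve_shift mu Q j n :
  evolve mu Q (j + n) = evolve (evolve mu Q j) (fun i => Q (j + i)%N) n.
Proof. by elim: n => [|n IH]; rewrite ?addn0 // addnS /= IH. Qed.

Lemma evolve_linear mu Q n v' :
  evolve mu Q n v' = \sum_w mu w * evolve (dirac_chi R w) Q n v'.
Proof.
elim: n v' => [|n IH] v' /=.
  rewrite (bigD1 v') //= /dirac_chi eqxx mulr1 big1 ?addr0 // => w /negbTE.
  by rewrite eq_sym => ->; rewrite mulr0.
rewrite /step.
transitivity (\sum_u \sum_w mu w * evolve (dirac_chi R w) Q n u * Q n u v').
  by apply: eq_bigr => u _; rewrite IH big_distrl.
rewrite exchange_big /=; apply: eq_bigr => w _.
by rewrite big_distrr /=; apply: eq_bigr => u _; rewrite mulrA.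
Qed.

Lemma dirac_ge0 (v w : chi) : 0 <= dirac_chi R v w.
Proof. by rewrite /dirac_chi; case: eqP. Qed.

Lemma dirac_mass (v : chi) : \sum_u dirac_chi R v u = 1.
Proof.
by rewrite (bigD1 v) //= big1 ?addr0 /dirac_chi ?eqxx // => u /negbTE ->.
Qed.

Lemma step_ge0 mu P : stochastic P -> (forall w, 0 <= mu w) ->
  forall v, 0 <= step mu P v.
Proof. by move=> [P0 _] mu0 v; apply: sumr_ge0 => w _; rewrite mulr_ge0. Qed.

Lemma step_mass mu P : stochastic P -> \sum_v step mu P v = \sum_v mu v.
Proof.
move=> [_ P1]; rewrite /step exchange_big /=; apply: eq_bigr => w _.
by rewrite -big_distrr /= P1 mulr1.
Qed.

Lemma evolve_ge0 mu Q n : (forall j, stochastic (Q j)) ->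
  (forall w, 0 <= mu w) -> forall v, 0 <= evolve mu Q n v.
Proof. by move=> sQ mu0; elim: n => //= n IH; apply: step_ge0. Qed.

Lemma evolve_mass mu Q n : (forall j, stochastic (Q j)) ->
  \sum_v evolve mu Q n v = \sum_v mu v.
Proof. by move=> sQ; elim: n => //= n <-; rewrite step_mass. Qed.

Lemma evolve_dirac_tv w Q j : (forall j, stochastic (Q j)) ->
  tv_norm (evolve (dirac_chi R w) Q j) = 1.
Proof.
move=> sQ; rewrite /tv_norm -(dirac_mass w) -(evolve_mass _ j sQ).
by apply: eq_bigr => u _; rewrite ger0_norm // evolve_ge0 // => u'; apply: dirac_ge0.
Qed.

Lemma evolve_dirac_bounds Q v k u : (forall j, stochastic (Q j)) ->
  0 <= evolve (dirac_chi R v) Q k u <= 1.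
Proof.
move=> sQ; have ge0 w := evolve_ge0 k sQ (dirac_ge0 v) w.
rewrite ge0 /= -(evolve_dirac_tv v k sQ) /tv_norm (bigD1 u) //= ger0_norm //.
by rewrite lerDl sumr_ge0.
Qed.

Lemma tv_normD (f g : chi -> R) :
  tv_norm (fun v => f v + g v) <= tv_norm f + tv_norm g.
Proof. by rewrite /tv_norm -big_split /=; apply: ler_sum => v _; apply: ler_normD. Qed.

Lemma tv_step_le mu P : stochastic P -> tv_norm (step mu P) <= tv_norm mu.
Proof.
move=> [P0 P1]; rewrite /tv_norm /step.
apply: (le_trans (ler_sum _ (fun v _ => ler_norm_sum _ _ _))).
rewrite exchange_big /=; apply: ler_sum => w _.
under eq_bigr => v _ do rewrite normrM (ger0_norm (P0 _ _)).
by rewrite -big_distrr /= P1 mulr1.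
Qed.

Lemma tv_step_kernel_diff mu P1 P2 :
  tv_norm (fun v => step mu P1 v - step mu P2 v) <=
  \sum_w `|mu w| * \sum_v `|P1 w v - P2 w v|.
Proof.
rewrite /tv_norm /step.
under eq_bigr => v _ do rewrite -sumrB.
apply: (le_trans (ler_sum _ (fun v _ => ler_norm_sum _ _ _))).
rewrite exchange_big /=; apply: ler_sum => w _.
by rewrite big_distrr /=; apply: ler_sum => v _; rewrite -mulrBr normrM.
Qed.

Lemma step_subl mu1 mu2 P v :
  step mu1 P v - step mu2 P v = step (fun w => mu1 w - mu2 w) P v.
Proof. by rewrite /step -sumrB; apply: eq_bigr => w _; rewrite mulrBl. Qed.

Lemma evolve_tv_diff mu Q1 Q2 k : (forall j, stochastic (Q1 j)) ->
  tv_norm (fun v => evolve mu Q1 k v - evolve mu Q2 k v) <=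
  \sum_(j < k) \sum_w `|evolve mu Q2 j w| * \sum_v `|Q1 j w v - Q2 j w v|.
Proof.
move=> sQ; elim: k => [|k IH].
  by rewrite big_ord0 /tv_norm big1 // => v _; rewrite subrr normr0.
rewrite big_ord_recr /=.
set A := evolve mu Q1 k; set B := evolve mu Q2 k.
have -> : (fun v => step A (Q1 k) v - step B (Q2 k) v) =
   (fun v => step (fun w => A w - B w) (Q1 k) v + (step B (Q1 k) v - step B (Q2 k) v)).
  by apply/funext => v; rewrite -step_subl addrA subrK.
apply: (le_trans (tv_normD _ _)); apply: lerD; last exact: tv_step_kernel_diff.
by apply: le_trans IH; apply: tv_step_le.
Qed.

End Evolution.

Arguments dirac_ge0 {R chi}.
Arguments dirac_mass {R chi}.

Lemma geometric_block_sum (R : realType) (m : nat -> R) (n : nat) (z : R) :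
  (0 < n)%N -> 0 <= z < 1 -> (forall j, 0 <= m j) -> (forall j, m j.+1 <= m j) ->
  (forall j, m (j + n)%N <= z * m j) ->
  forall k, \sum_(j < k) m j <= n%:R * m 0%N / (1 - z).
Proof.
move=> n_gt0 /andP[z_ge0 z_lt1] m_ge0 /nonincreasing_seqP m_noninc m_contract.
have z_gap : 0 < 1 - z by rewrite subr_gt0.
have block j : \sum_(i < n) m (j + i)%N <= n%:R * m j.
  apply: le_trans (_ : \sum_(i < n) m j <= _); last by rewrite sumr_const card_ord mulr_natl.
  by apply: ler_sum => i _; apply: m_noninc; rewrite leq_addr.
suff shifted k j : \sum_(i < k) m (j + i)%N <= n%:R * m j / (1 - z).
  by move=> k; have := shifted k 0%N; under eq_bigr do rewrite add0n.
elim/ltn_ind: k j => k IH j.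
have nmj_ge0 : 0 <= n%:R * m j by rewrite mulr_ge0.
case: (leqP k n) => [k_le_n | n_lt_k].
  apply: le_trans (_ : n%:R * m j <= _).
    apply: le_trans (block j); rewrite -(subnKC k_le_n) big_split_ord /= lerDl.
    by apply: sumr_ge0 => i _.
  by rewrite ler_pdivlMr // ler_piMr // lerBlDr lerDl.
rewrite -(subnKC (ltnW n_lt_k)) big_split_ord /=.
have rest : \sum_(i < k - n) m (j + (n + i))%N <= n%:R * m (j + n)%N / (1 - z).
  under eq_bigr do rewrite addnA.
  by apply: IH; rewrite ltn_subrL n_gt0 (leq_trans n_gt0 (ltnW n_lt_k)).
apply: le_trans (lerD (block j) rest) _.
suff -> : n%:R * m j / (1 - z) = n%:R * m j + n%:R * (z * m j) / (1 - z).
  by rewrite lerD2l ler_pM2r ?invr_gt0 // ler_wpM2l.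
by field; rewrite gt_eqF.
Qed.

Section Absorbing.
Variables (R : realType) (chi : finType) (E : {set chi}).
Implicit Types (mu : chi -> R) (P : tkernel R chi) (Q : nat -> tkernel R chi).
Implicit Types (z d : R).

Definition absorbing P := stochastic P /\ forall e, e \in E -> P e e = 1.

Definition mass_out mu := \sum_(v in ~: E) mu v.

Lemma absorbing_row P e v : absorbing P -> e \in E -> P e v = dirac_chi R e v.
Proof.
move=> [[P0 P1] PE] eE; rewrite /dirac_chi.
have := P1 e; rewrite (bigD1 e) //= PE // => /(congr1 (fun x => x - 1)).
rewrite /= addrAC subrr add0r => /psumr_eq0P rest0.
by case: eqP => [->|/eqP ne]; [exact: PE | apply: rest0; rewrite // ne].
Qed.

Lemma evolve_dirac_absorbing Q e n : (forall j, absorbing (Q j)) -> e \in E ->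
  evolve (dirac_chi R e) Q n = dirac_chi R e.
Proof.
move=> aQ eE; elim: n => //= n ->; apply/funext => v.
rewrite /step (bigD1 e) //= big1 ?addr0; first by rewrite /dirac_chi eqxx mul1r absorbing_row.
by move=> w /negbTE; rewrite /dirac_chi => ->; rewrite mul0r.
Qed.

Lemma mass_out_dirac_absorbing e : e \in E -> mass_out (dirac_chi R e) = 0.
Proof.
by move=> eE; apply: big1 => v; rewrite inE /dirac_chi; case: eqP => // ->; rewrite eE.
Qed.

Lemma mass_out_ge0 mu : (forall w, 0 <= mu w) -> 0 <= mass_out mu.
Proof. by move=> mu0; apply: sumr_ge0. Qed.

Lemma mass_out_le_mass mu : (forall w, 0 <= mu w) -> mass_out mu <= \sum_v mu v.
Proof.
by move=> mu0; rewrite [X in _ <= X](bigID (fun v => v \in ~: E)) /= lerDl sumr_ge0.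
Qed.

(* Mass never leaves the absorbing set, so the outside mass is nonincreasing. *)
Lemma mass_out_step_le mu P : absorbing P -> (forall w, 0 <= mu w) ->
  mass_out (step mu P) <= mass_out mu.
Proof.
move=> aP mu0; rewrite /mass_out /step exchange_big /=.
rewrite [X in _ <= X]big_mkcond /=; apply: ler_sum => w _.
rewrite -big_distrr /=; case: ifP => wE.
  rewrite -[X in _ <= X]mulr1 ler_wpM2l //.
  have [[_ P1] _] := aP; rewrite -(P1 w); exact: mass_out_le_mass (fun v => aP.1.1 w v).
rewrite inE in wE; move/negbFE: wE => wE.
rewrite big1 ?mulr0 // => v vE; rewrite absorbing_row // /dirac_chi.
by case: eqP => // eq; move: vE; rewrite eq inE wE.
Qed.

Lemma mass_out_evolve_contract mu Q n z : (forall j, absorbing (Q j)) ->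
  (forall w, 0 <= mu w) ->
  (forall w, w \in ~: E -> mass_out (evolve (dirac_chi R w) Q n) <= z) ->
  mass_out (evolve mu Q n) <= z * mass_out mu.
Proof.
move=> aQ mu0 Hz.
have -> : mass_out (evolve mu Q n) =
    \sum_w mu w * mass_out (evolve (dirac_chi R w) Q n).
  rewrite /mass_out; under eq_bigr => v _ do rewrite evolve_linear.
  by rewrite exchange_big /=; apply: eq_bigr => w _; rewrite big_distrr.
rewrite /mass_out big_distrr /= [X in _ <= X]big_mkcond /=.
apply: ler_sum => w _; case: ifP => wE.
  by rewrite mulrC ler_wpM2r // Hz.
rewrite inE in wE; move/negbFE: wE => wE.
by rewrite evolve_dirac_absorbing // -/(mass_out _) mass_out_dirac_absorbing ?mulr0.
Qed.

Lemma mass_out_perturb w P0 Q n d :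
  (forall j, stochastic (Q j)) -> stochastic P0 ->
  (forall j w', \sum_v `|P0 w' v - Q j w' v| <= d) ->
  mass_out (evolve (dirac_chi R w) Q n)
    <= mass_out (evolve (dirac_chi R w) (fun=> P0) n) + n%:R * d.
Proof.
move=> sQ sP0 Hd; rewrite -lerBlDl /mass_out -sumrB.
apply: le_trans (ler_sum _ (fun v _ => ler_norm _)) _.
apply: le_trans (_ : tv_norm (fun v => evolve (dirac_chi R w) (fun=> P0) n v -
   evolve (dirac_chi R w) Q n v) <= _).
  rewrite /tv_norm [X in _ <= X](bigID (fun v => v \in ~: E)) /=.
  by apply: ler_wpDr; [apply: sumr_ge0 | apply: ler_sum => v _; rewrite distrC].
apply: le_trans (evolve_tv_diff (dirac_chi R w) Q n (fun=> sP0)) _.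
have -> : n%:R * d = \sum_(j < n) d by rewrite sumr_const card_ord mulr_natl.
apply: ler_sum => j _.
apply: le_trans (_ : \sum_w' `|evolve (dirac_chi R w) Q j w'| * d <= _).
  by apply: ler_sum => w' _; apply: ler_wpM2l.
by rewrite -big_distrl /= -/(tv_norm _) evolve_dirac_tv // mul1r.
Qed.

(* Since rows at absorbing states agree, only the outside mass of the
   perturbed chain contributes to the telescoping bound. *)
Lemma evolve_tv_mass_out mu P0 Q k d : absorbing P0 -> (forall j, absorbing (Q j)) ->
  (forall w, 0 <= mu w) -> (forall j w, \sum_u `|P0 w u - Q j w u| <= d) ->
  tv_norm (fun u => evolve mu (fun=> P0) k u - evolve mu Q k u)
    <= d * \sum_(j < k) mass_out (evolve mu Q j).
Proof.
move=> aP0 aQ mu0 Hd.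
apply: le_trans (evolve_tv_diff mu Q k (fun=> aP0.1)) _.
rewrite big_distrr /=; apply: ler_sum => j _.
rewrite /mass_out big_distrr [X in _ <= X]big_mkcond /=; apply: ler_sum => w _.
have Bw_ge0 : 0 <= evolve mu Q j w by apply: evolve_ge0 => // i; case: (aQ i).
case: ifP => wE; first by rewrite ger0_norm // mulrC ler_wpM2r.
rewrite inE in wE; move/negbFE: wE => wE.
by rewrite big1 ?mulr0 // => u _; rewrite !absorbing_row // subrr normr0.
Qed.

Lemma absorbing_perturbation_tv P0 Q v n z (z' : R) d :
  absorbing P0 -> (forall j, absorbing (Q j)) -> (0 < n)%N ->
  (forall w, mass_out (evolve (dirac_chi R w) (fun=> P0) n) <= z) ->
  (forall j w, \sum_u `|P0 w u - Q j w u| <= d) ->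
  z + n%:R * d <= z' -> z' < 1 ->
  forall k, tv_norm (fun u => evolve (dirac_chi R v) (fun=> P0) k u
                              - evolve (dirac_chi R v) Q k u)
            <= n%:R * d / (1 - z').
Proof.
move=> aP0 aQ n_gt0 Hz Hd z'_ge z'_lt1 k.
have sQ j : stochastic (Q j) by case: (aQ j).
pose m j := mass_out (evolve (dirac_chi R v) Q j).
have B_ge0 j := evolve_ge0 j sQ (dirac_ge0 v).
have m_ge0 j : 0 <= m j by apply: mass_out_ge0.
have d_ge0 : 0 <= d by apply: le_trans (Hd 0%N v); apply: sumr_ge0.
have z_ge0 : 0 <= z.
  apply: le_trans (Hz v); apply/mass_out_ge0/evolve_ge0 => [j|w].
  - exact: aP0.1.
  - exact: dirac_ge0.
have z'_range : 0 <= z' < 1 by rewrite z'_lt1 andbT; apply: le_trans z'_ge; rewrite addr_ge0 ?mulr_ge0.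
have m_noninc j : m j.+1 <= m j by apply: mass_out_step_le.
have m_contract j : m (j + n)%N <= z' * m j.
  rewrite /m evolve_shift; apply: mass_out_evolve_contract => // w _.
  apply: le_trans (mass_out_perturb w _ (fun=> sQ _) aP0.1 (fun i => Hd _)) _.
  by apply: le_trans z'_ge; rewrite lerD2r Hz.
have m0_le1 : m 0%N <= 1 by rewrite -(dirac_mass v); apply: mass_out_le_mass.
apply: le_trans (evolve_tv_mass_out k aP0 aQ (dirac_ge0 v) Hd) _.
apply: le_trans (ler_wpM2l d_ge0 (geometric_block_sum n_gt0 z'_range m_ge0 m_noninc m_contract k)) _.
have -> : n%:R * d / (1 - z') = d * (n%:R * 1 / (1 - z')) by rewrite mulr1; ring.
rewrite ler_wpM2l // ler_pM2r ?invr_gt0 ?subr_gt0 // ler_wpM2l //.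
Qed.

End Absorbing.

Section PoissonMixture.
Variable R : realType.

Lemma poisson_weight_ge0 (lam t : R) k : 0 <= lam * t -> 0 <= poisson_weight lam t k.
Proof.
by move=> a0; rewrite /poisson_weight mulr_ge0 ?invr_ge0 ?mulr_ge0 ?expR_ge0 ?exprn_ge0.
Qed.

(* Partial sums of the Poisson weights are partial sums of e^-a e^a = 1. *)
Lemma poisson_weight_sum_le1 (lam t : R) n : 0 <= lam * t ->
  \sum_(k < n) poisson_weight lam t k <= 1.
Proof.
move=> a0; set a := lam * t.
have -> : \sum_(k < n) poisson_weight lam t k = expR (- a) * series (exp_coeff a) n.
  rewrite /series /= big_mkord big_distrr /=; apply: eq_bigr => k _.
  by rewrite /poisson_weight /exp_coeff /= mulrA.
have series_le : series (exp_coeff a) n <= expR a.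
  apply: nondecreasing_cvgn_le; last exact: is_cvg_series_exp_coeff.
  apply/nondecreasing_seqP => m; rewrite /series /= big_nat_recr //= lerDl.
  exact: exp_coeff_ge0.
apply: le_trans (_ : expR (- a) * expR a <= 1).
  by rewrite ler_wpM2l ?expR_ge0.
by rewrite expRN mulVf ?gt_eqF ?expR_gt0.
Qed.

Lemma poisson_mixture_cvg (lam t : R) (f : nat -> R) : 0 <= lam * t ->
  (forall k, 0 <= f k <= 1) ->
  cvgn (fun n => \sum_(k < n) poisson_weight lam t k * f k).
Proof.
move=> a0 f01; apply: nondecreasing_is_cvgn.
  apply/nondecreasing_seqP => m; rewrite big_ord_recr /= lerDl.
  by rewrite mulr_ge0 ?poisson_weight_ge0 //; case/andP: (f01 m).
exists 1 => _ [n _ <-]; apply: le_trans (poisson_weight_sum_le1 n a0).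
apply: ler_sum => k _; rewrite -[X in _ <= X]mulr1 ler_wpM2l ?poisson_weight_ge0 //.
by case/andP: (f01 k).
Qed.

Lemma tv_limn (chi : finType) (SA SB : nat -> chi -> R) (M : R) :
  (forall v, cvgn (fun n => SA n v)) -> (forall v, cvgn (fun n => SB n v)) ->
  (forall n, tv_norm (fun v => SA n v - SB n v) <= M) ->
  tv_norm (fun v => limn (fun n => SA n v) - limn (fun n => SB n v)) <= M.
Proof.
move=> cA cB HM.
have cv : (fun n => tv_norm (fun v => SA n v - SB n v)) @ \oo -->
    tv_norm (fun v => limn (fun n => SA n v) - limn (fun n => SB n v)).
  apply: (@cvg_big _ _ +%R 0 predT) => //; first exact: add_continuous.
  by move=> v _; apply: cvg_norm; apply: cvgB; [exact: (cA v) | exact: (cB v)].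
rewrite -(cvg_lim _ cv) //; apply: limr_le; first by apply/cvg_ex; eexists; exact: cv.
by near=> n; apply: HM.
Unshelve. all: by end_near.
Qed.

Lemma poisson_law_tv (chi : finType) (lam t C : R) (Q1 Q2 : nat -> tkernel R chi) v :
  0 <= lam * t -> (forall j, stochastic (Q1 j)) -> (forall j, stochastic (Q2 j)) ->
  (forall k, tv_norm (fun u => seq_dist Q1 v k u - seq_dist Q2 v k u) <= C) ->
  tv_norm (fun u => poisson_law lam t Q1 v u - poisson_law lam t Q2 v u) <= C.
Proof.
move=> a0 sQ1 sQ2 HC.
have C_ge0 : 0 <= C by apply: le_trans (HC 0%N); apply: sumr_ge0.
pose mixture Q n u := \sum_(k < n) poisson_weight lam t k * seq_dist Q v k u.
have mixture_cvg Q u : (forall j, stochastic (Q j)) -> cvgn (fun n => mixture Q n u).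
  move=> sQ; apply: (poisson_mixture_cvg (f := fun k => seq_dist Q v k u)) => // k.
  by rewrite seq_dist_evolve; apply: evolve_dirac_bounds.
apply: (@tv_limn chi (mixture Q1) (mixture Q2)) => [u|u|n].
- exact: mixture_cvg.
- exact: mixture_cvg.
apply: le_trans (_ : \sum_(k < n) poisson_weight lam t k * C <= _); last first.
  by rewrite -big_distrl /= ler_piMl // poisson_weight_sum_le1.
have w_ge0 k : 0 <= poisson_weight lam t k by apply: poisson_weight_ge0.
rewrite /tv_norm /mixture; under eq_bigr => u _ do rewrite -sumrB.
apply: le_trans (ler_sum _ (fun u _ => ler_norm_sum _ _ _)) _.
rewrite exchange_big /=; apply: ler_sum => k _.
under eq_bigr => u _ do rewrite -mulrBr normrM (ger0_norm (w_ge0 k)).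
by rewrite -big_distrr /=; apply: ler_wpM2l; [exact: w_ge0 | exact: HC].
Qed.

End PoissonMixture.

Unset Implicit Arguments. Set Strict Implicit.

Theorem mainTheorem4 (R : realType) (N : nat) (chi : finType)
  (P : 'rV[R]_N -> tkernel R chi) (E : {set chi}) (ntilde : nat) (z0 K0 : R) :
  (1 <= N)%N ->
  (forall x, stochastic (P x)) ->
  (forall x e, e \in E -> P x e e = 1) ->
  (1 <= ntilde)%N -> z0 < 1 ->
  (forall x v, \sum_(v' in ~: E) frozen_dist (P x) v ntilde v' <= z0) ->
  0 < K0 ->
  (forall x x' v, \sum_(v' : chi) `|P x v v' - P x' v v'| <= K0 * norm1 (x - x')) ->
  exists K : R, 0 < K /\
    forall (x : 'rV[R]_N) (v : chi) (lam t : R) (l : nat -> 'rV[R]_N),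
      0 < lam -> 0 <= t ->
      (forall i, norm1 (x - l i) <= (1 - z0) / (2 * K0 * ntilde%:R)) ->
      tv_norm (fun v' => mu_frozen P lam t x v v' - mu_seq P lam t l v v')
        <= K * sup (range (fun i => norm1 (x - l i))).
Proof.
move=> _ sP absP n_gt0 z0_lt1 Hout K0_gt0 Hlip.
have z0_gap : 0 < 1 - z0 by rewrite subr_gt0.
have n_pos : 0 < ntilde%:R :> R by rewrite ltr0n.
exists (2 * K0 * ntilde%:R / (1 - z0)); split; first by rewrite divr_gt0 // !mulr_gt0.
move=> x v lam t l lam_gt0 t_ge0 Hl.
set c := (1 - z0) / (2 * K0 * ntilde%:R).
set dl := sup _.
have dist_bounded : has_sup (range (fun i => norm1 (x - l i))).
  by split; [exists (norm1 (x - l 0%N)), 0%N | exists c => _ [j _ <-]; apply: Hl].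
have dist_le_dl i : norm1 (x - l i) <= dl by apply: sup_upper_bound; last exists i.
have dl_le_c : dl <= c by apply: ge_sup; [exists (norm1 (x - l 0%N)), 0%N | move=> _ [j _ <-]; apply: Hl].
have aP y : absorbing E (P y) by split; [apply: sP | apply: absP].
rewrite /mu_frozen /mu_seq; apply: poisson_law_tv => [|j|j|k].
- by apply: mulr_ge0 => //; apply: ltW.
- exact: sP.
- exact: sP.
rewrite !seq_dist_evolve.
have -> : 2 * K0 * ntilde%:R / (1 - z0) * dl = ntilde%:R * (K0 * dl) / (1 - (1 + z0) / 2).
  by field; rewrite gt_eqF //; lra.
apply: (absorbing_perturbation_tv v (z := z0)) => //.
- by move=> w; rewrite -frozen_dist_evolve; apply: Hout.
- move=> j w; apply: le_trans (Hlip _ _ _) _.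
  by apply: ler_wpM2l; [exact: ltW | exact: dist_le_dl].
- have := ler_wpM2l (ler0n R ntilde) (ler_wpM2l (ltW K0_gt0) dl_le_c).
  have -> : ntilde%:R * (K0 * c) = (1 - z0) / 2 by rewrite /c; field; rewrite !gt_eqF.
  lra.
- lra.
Qed.
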